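(* Let $T$ be a rooted binary phylogenetic $X$-tree with $|X|=n\geq 2$. Then there exist strictly positive edge lengths $\lambda_1,\ldots,\lambda_{2n-2}$ for $T$ such that (i) the ranking $\pi_T$ is strict, and (ii) deleting the leaf $y=\arg\min_{x\in X}FP_T(x)$ yields a tree $\widetilde T=T_{\widetilde X}$ on $\widetilde X=X\setminus\{y\}$ whose ranking $\pi_{\widetilde T}$ is strict and satisfies $\arg\max_{x\in\widetilde X}FP_{\widetilde T}(x)=\arg\min_{x\in\widetilde X}FP_T(x)$; i.e. the leaf with the second lowest $FP_T$ value has the highest $FP_{\widetilde T}$ value.
   Context: A rooted binary phylogenetic $X$-tree ($X$ finite, $|X|=n$) is a rooted tree whose root $\rho$ has in-degree 0 and out-degree 2, all edges directed away from $\rho$, all other interior vertices have in-degree 1 and out-degree 2, and whose leaves are bijectively labelled by $X$ (for $|X|=1$ it may be a single vertex); it has $2n-2$ edges. Every edge $e$ has a strictly positive length $\lambda_e$. The Fair Proportion index of $x\in X$ is $FP_T(x)=\sum_{e\in P(T;\rho,x)}\lambda_e/D_e$, where $P(T;\rho,x)$ is the path from $\rho$ to $x$ and $D_e$ is the number of leaves descended from $e$. For $Y\subseteq X$, the induced subtree $T_Y$ is obtained from the minimal subtree of $T$ connecting $Y$ by suppressing all non-root vertices of in- and out-degree 1, adding the lengths of merged edges; if the root then has out-degree 1, it and its incident edge are deleted. The ranking $\pi_T$ orders $X$ by decreasing $FP_T$; it is strict if all values $FP_T(x)$ are pairwise distinct. *)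

From HB Require Import structures.
From mathcomp Require Import all_boot all_order all_algebra.
From mathcomp Require Import reals.
Set Implicit Arguments. Unset Strict Implicit. Unset Printing Implicit Defensive.
Import Order.TTheory GRing.Theory Num.Theory.
Local Open Scope ring_scope.

Inductive ptree (X : Type) :=
  | PLeaf of X
  | PNode of ptree X & ptree X.

Fixpoint pleaves (X : Type) (t : ptree X) : seq X :=
  match t with PLeaf x => [:: x] | PNode l r => pleaves l ++ pleaves r end.

Definition phylo_tree (X : finType) (t : ptree X) : Prop :=
  perm_eq (pleaves t) (enum X).

(* Rooted binary tree with edge lengths: WNode l a r b has edges of
   lengths a (to l) and b (to r). *)
Inductive wtree (X : Type) (R : Type) :=
  | WLeaf of X
  | WNode of wtree X R & R & wtree X R & R.

Fixpoint wshape (X R : Type) (w : wtree X R) : ptree X :=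
  match w with
  | WLeaf x => PLeaf x
  | WNode l _ r _ => PNode (wshape l) (wshape r)
  end.

Fixpoint wleaves (X R : Type) (w : wtree X R) : seq X :=
  match w with WLeaf x => [:: x] | WNode l _ r _ => wleaves l ++ wleaves r end.

Fixpoint pos_lengths (X : Type) (R : realType) (w : wtree X R) : Prop :=
  match w with
  | WLeaf _ => True
  | WNode l a r b => 0 < a /\ 0 < b /\ pos_lengths l /\ pos_lengths r
  end.

(* Fair Proportion index: sum over edges e on the root-to-x path of
   lambda_e / D_e, D_e = number of leaves below e. *)
Fixpoint FP (X : eqType) (R : realType) (w : wtree X R) (x : X) : R :=
  match w with
  | WLeaf _ => 0
  | WNode l a r b =>
      if x \in wleaves l then a / (size (wleaves l))%:R + FP l x
      else if x \in wleaves r then b / (size (wleaves r))%:R + FP r x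
      else 0
  end.

(* Restriction to the leaf set Y: returns the induced subtree of the
   subtree w together with the length of the (suppressed) path above its
   top vertex, to be added to the incoming edge. *)
Fixpoint restr (X : Type) (R : realType) (Y : pred X) (w : wtree X R)
  : option (wtree X R * R) :=
  match w with
  | WLeaf x => if Y x then Some (WLeaf R x, 0) else None
  | WNode l a r b =>
      match restr Y l, restr Y r with
      | Some (l', a'), Some (r', b') => Some (WNode l' (a + a') r' (b + b'), 0)
      | Some (l', a'), None => Some (l', a + a')
      | None, Some (r', b') => Some (r', b + b')
      | None, None => None
      end
  end.

(* Induced subtree T_Y (None iff Y contains no leaf). The length above the
   top vertex is dropped: a root of out-degree 1 is deleted with its edge. *)
Definition induced (X : Type) (R : realType) (Y : pred X) (w : wtree X R)
  : option (wtree X R) :=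
  omap fst (restr Y w).

From HB Require Import structures.
From mathcomp Require Import all_boot all_order all_algebra.
From mathcomp Require Import reals.
From mathcomp Require Import ring lra.
Set Implicit Arguments. Unset Strict Implicit. Unset Printing Implicit Defensive.
Import Order.TTheory GRing.Theory Num.Theory.
Local Open Scope ring_scope.

(* Every tree with at least two leaves has a cherry {y, z}.  We
   specify the lengths through their FP "shares" lambda_e / D_e: the edge
   entering the parent of the cherry gets share c, every other interior edge
   a tiny share eps, and each pendant edge the share making FP_T(x) equal to
   a target K + key x, where key enumerates X as y, z, then the other leaves.
   So FP_T is strict, with y lowest and z second.
     Deleting y divides each edge e above y by D_e - 1 instead of D_e and
   merges the cherry edge into z's pendant edge.  On our tree this adds to each target an excess
   lying between 0 and the sum of interior shares on the path (at most 1/4)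
   for leaves other than z, while for z the cherry edge alone contributes an
   excess c.  Taking c larger than the spread of the targets makes z the
   maximum, and the bound 1/4 keeps the new ranking strict.  When T is the
   cherry itself, X \ {y} = {z} and part (ii) is trivial. *)

Section InducedSubtree.
Variables (X : eqType) (R : realType) (Y : pred X).

(* FP index of x in the induced subtree T_Y, read off T itself: the length of
   each edge on the path to x is divided by the number of Y-leaves below it. *)
Fixpoint FP_on (w : wtree X R) (x : X) : R :=
  match w with
  | WLeaf _ => 0
  | WNode l a r b =>
      if x \in wleaves l then a / (count Y (wleaves l))%:R + FP_on l x
      else if x \in wleaves r then b / (count Y (wleaves r))%:R + FP_on r x
      else 0
  end.

Lemma restr_leaves (w : wtree X R) :
  match restr Y w with
  | Some (w', _) => wleaves w' = filter Y (wleaves w)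
  | None => filter Y (wleaves w) = [::]
  end.
Proof.
elim: w => [x|l IHl a r IHr b] /=; first by case: (Y x).
rewrite filter_cat.
case: (restr Y l) IHl => [[l' a1]|] IHl; case: (restr Y r) IHr => [[r' b1]|] IHr;
  by rewrite //= IHl IHr ?cats0.
Qed.

Lemma restr_some (w : wtree X R) :
  has Y (wleaves w) -> exists w' a', restr Y w = Some (w', a').
Proof.
have := restr_leaves w; case: (restr Y w) => [[w' a']|] E; first by exists w', a'.
by rewrite has_filter E.
Qed.

(* Correctness of FP_on: suppressing a vertex merges two edges whose shares
   add up, because both now lie above the same set of surviving leaves; a'
   is the length of the suppressed path above the top vertex. *)
Lemma FP_restr (w w' : wtree X R) (a' : R) (x : X) :
  restr Y w = Some (w', a') -> Y x -> x \in wleaves w ->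
  a' / (size (wleaves w'))%:R + FP w' x = FP_on w x.
Proof.
move=> + Yx; elim: w w' a' => [x0|l IHl a r IHr b] w' a' /=.
  by case: (Y x0) => // -[<- <-]; rewrite mul0r add0r.
have notin (u : wtree X R) : filter Y (wleaves u) = [::] -> x \notin wleaves u.
  by move=> E; apply/negP => xu; have := mem_filter Y x (wleaves u); rewrite E Yx xu.
have Ll := restr_leaves l; have Lr := restr_leaves r.
case El: (restr Y l) Ll => [[l' a1]|] Ll; case Er: (restr Y r) Lr => [[r' b1]|] Lr //=.
- move=> [<- <-] _ /=; rewrite mul0r add0r Ll Lr !mem_filter Yx /=.
  case: ifP => xl; first by rewrite -(IHl _ _ El xl) Ll size_filter mulrDl addrA.
  case: ifP => xr; last by [].
  by rewrite -(IHr _ _ Er xr) Lr size_filter mulrDl addrA.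
- move=> [<- <-]; rewrite mem_cat (negbTE (notin _ Lr)) orbF => xl.
  by rewrite xl -(IHl _ _ El xl) Ll size_filter mulrDl addrA.
- move=> [<- <-]; rewrite mem_cat (negbTE (notin _ Ll)) /= => xr.
  by rewrite xr -(IHr _ _ Er xr) Lr size_filter mulrDl addrA.
Qed.

Lemma induced_some (w : wtree X R) :
  has Y (wleaves w) -> exists wt, induced Y w = Some wt.
Proof. by case/restr_some => w' [a' E]; exists w'; rewrite /induced E. Qed.

(* If both sides of the root keep a leaf, the root survives, no length is
   dropped, and FP of the induced tree is exactly FP_on. *)
Lemma induced_node (l r : wtree X R) (a b : R) :
  has Y (wleaves l) -> has Y (wleaves r) ->
  exists wt, induced Y (WNode l a r b) = Some wt /\
    forall x, Y x -> x \in wleaves (WNode l a r b) ->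
      FP wt x = FP_on (WNode l a r b) x.
Proof.
move=> /restr_some [l' [a1 El]] /restr_some [r' [b1 Er]].
have E : restr Y (WNode l a r b) = Some (WNode l' (a + a1) r' (b + b1), 0).
  by rewrite /= El Er.
exists (WNode l' (a + a1) r' (b + b1)); split; first by rewrite /induced E.
by move=> x Yx xw; rewrite -(FP_restr E Yx xw) mul0r add0r.
Qed.

End InducedSubtree.

Section PathSums.
Variables (X : eqType) (R : realType).
Implicit Types (t u : ptree X) (g h : ptree X -> R) (x : X).

Definition cherry (a b : X) : ptree X := PNode (PLeaf a) (PLeaf b).

Inductive subtree (u : ptree X) : ptree X -> Prop :=
  | subtree_refl : subtree u u
  | subtree_l l r : subtree u l -> subtree u (PNode l r)
  | subtree_r l r : subtree u r -> subtree u (PNode l r).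

Lemma size_pleaves_gt0 t : (0 < size (pleaves t))%N.
Proof. by elim: t => //= l IHl r _; rewrite size_cat addn_gt0 IHl. Qed.

Lemma subtree_leaves u t : subtree u t -> {subset pleaves u <= pleaves t}.
Proof. by elim=> // l r _ sub x /sub /=; rewrite mem_cat => ->; rewrite ?orbT. Qed.

Lemma subtree_uniq u t : subtree u t -> uniq (pleaves t) -> uniq (pleaves u).
Proof. by elim=> // l r _ IH /=; rewrite cat_uniq => /and3P [? _ ?]; apply: IH. Qed.

Lemma subtree_nodeP u l r :
  subtree u (PNode l r) -> [\/ u = PNode l r, subtree u l | subtree u r].
Proof.
move E : (PNode l r) => t sub.
case: sub E => [<-|l' r' sub [-> _]|l' r' sub [_ ->]]; first exact: Or31.
  exact: Or32.
exact: Or33.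
Qed.

Lemma exists_cherry l r : exists a b, subtree (cherry a b) (PNode l r).
Proof.
suff : forall t, (exists x, t = PLeaf x) \/ exists a b, subtree (cherry a b) t.
  by case/(_ (PNode l r)) => [[]|].
elim=> [x|l' [[a ->]|[a [b sub]]] r' [[c ->]|[a' [b' sub']]]]; first by left; exists x.
- by right; exists a, c; apply: subtree_refl.
- by right; exists a', b'; apply: subtree_r.
- by right; exists a, b; apply: subtree_l.
- by right; exists a, b; apply: subtree_l.
Qed.

Lemma notin_left l r x :
  uniq (pleaves (PNode l r)) -> x \in pleaves r -> (x \in pleaves l) = false.
Proof.
rewrite /= cat_uniq => /and3P [_ dis _] xr.
by apply/negP => xl; move/hasP: dis; apply; exists x.
Qed.

(* Sum of g over the subtrees met on the way from the root of t down to the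
   leaf x (the whole tree excluded, the leaf x included). *)
Fixpoint pathsum g t x : R :=
  match t with
  | PLeaf _ => 0
  | PNode l r =>
      if x \in pleaves l then g l + pathsum g l x
      else if x \in pleaves r then g r + pathsum g r x
      else 0
  end.

(* The tree of shape t in which the edge entering u has share g u, i.e.
   length g u times the number of leaves of u. *)
Fixpoint build g t : wtree X R :=
  match t with
  | PLeaf x => WLeaf R x
  | PNode l r => WNode (build g l) (g l * (size (pleaves l))%:R)
                       (build g r) (g r * (size (pleaves r))%:R)
  end.

Lemma wleaves_build g t : wleaves (build g t) = pleaves t.
Proof. by elim: t => //= l -> r ->. Qed.

Lemma wshape_build g t : wshape (build g t) = t.
Proof. by elim: t => //= l -> r ->. Qed.

Lemma pos_build g t : (forall u, 0 < g u) -> pos_lengths (build g t).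
Proof.
move=> g_gt0; elim: t => //= l IHl r IHr.
by rewrite !mulr_gt0 ?ltr0n ?size_pleaves_gt0.
Qed.

Lemma FP_build g t x : FP (build g t) x = pathsum g t x.
Proof.
elim: t => //= l IHl r IHr; rewrite !wleaves_build IHl IHr.
by rewrite !mulfK // pnatr_eq0 -lt0n size_pleaves_gt0.
Qed.

Lemma FP_on_build (Y : pred X) g t x :
  FP_on Y (build g t) x =
  pathsum (fun u => g u * (size (pleaves u))%:R / (count Y (pleaves u))%:R) t x.
Proof. by elim: t => //= l IHl r IHr; rewrite !wleaves_build IHl IHr. Qed.

Lemma pathsumD g h t x :
  pathsum (fun u => g u + h u) t x = pathsum g t x + pathsum h t x.
Proof.
elim: t => [_|l IHl r IHr] /=; first by rewrite addr0.
by case: ifP => _; [|case: ifP => _]; rewrite ?addr0 // ?IHl ?IHr addrACA.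
Qed.

(* Separating the pendant edge: if h agrees with g on interior vertices and
   vanishes on leaves, the g-path sum is the h-path sum plus the share of
   the pendant edge of x (stated for the path including the edge into t,
   which makes the induction go through). *)
Lemma pathsum_leaf g h t x :
  (forall l r, g (PNode l r) = h (PNode l r)) -> (forall x0, h (PLeaf x0) = 0) ->
  x \in pleaves t -> g t + pathsum g t x = h t + pathsum h t x + g (PLeaf x).
Proof.
move=> gh h0; elim: t => [x0|l IHl r IHr] /=.
  by rewrite inE => /eqP ->; rewrite h0 !addr0 add0r.
rewrite gh mem_cat; case: ifP => [xl _|_ /= xr]; first by rewrite IHl // !addrA.
by rewrite xr IHr // !addrA.
Qed.

Lemma pathsum_leaf_node g h l r x :
  (forall l r, g (PNode l r) = h (PNode l r)) -> (forall x0, h (PLeaf x0) = 0) ->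
  x \in pleaves (PNode l r) ->
  pathsum g (PNode l r) x = pathsum h (PNode l r) x + g (PLeaf x).
Proof.
move=> gh h0 xt; have := pathsum_leaf gh h0 xt.
by rewrite gh -addrA => /addrI.
Qed.

(* Comparison principles for path sums; the hypotheses only concern
   subtrees with distinct leaves, which are all those of a phylogenetic
   tree. *)
Lemma pathsum_le g h t x :
  (forall u, uniq (pleaves u) -> g u <= h u) -> uniq (pleaves t) ->
  pathsum g t x <= pathsum h t x.
Proof.
move=> gh; elim: t => //= l IHl r IHr; rewrite cat_uniq => /and3P [ul _ ur].
by case: ifP => _; [|case: ifP => _ //]; rewrite lerD ?gh ?IHl ?IHr.
Qed.

Lemma pathsum_ge0 g t x :
  (forall u, uniq (pleaves u) -> 0 <= g u) -> uniq (pleaves t) ->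
  0 <= pathsum g t x.
Proof.
move=> g_ge0; elim: t => //= l IHl r IHr; rewrite cat_uniq => /and3P [ul _ ur].
by case: ifP => _; [|case: ifP => _ //]; rewrite addr_ge0 ?g_ge0 ?IHl ?IHr.
Qed.

(* A path from the root passes through fewer subtrees than t has leaves. *)
Lemma pathsum_le_size g t x (d : R) :
  (forall u, x \in pleaves u -> g u <= d) -> 0 <= d ->
  pathsum g t x <= d * (size (pleaves t))%:R.
Proof.
move=> gd d_ge0; elim: t => [_|l IHl r IHr] /=; first by rewrite mulr_ge0.
have d_le u : d <= d * (size (pleaves u))%:R.
  by rewrite ler_peMr // ler1n size_pleaves_gt0.
rewrite size_cat natrD mulrDr.
case: ifP => [xl|_]; first by have := gd _ xl; have := d_le r; lra.
case: ifP => [xr|_]; first by have := gd _ xr; have := d_le l; lra.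
by rewrite addr_ge0 // mulr_ge0.
Qed.

(* A nonnegative path sum dominates each of its terms: the subtree u lies on
   the path to any of its leaves. *)
Lemma pathsum_ge_subtree g u t x :
  (forall u, uniq (pleaves u) -> 0 <= g u) -> subtree u t ->
  uniq (pleaves t) -> x \in pleaves u -> g u <= g t + pathsum g t x.
Proof.
move=> g_ge0 sub ut xu; elim: sub ut => [|l r sub IH|l r sub IH] ut.
- by rewrite lerDl pathsum_ge0.
- move: (ut) => /=; rewrite cat_uniq => /and3P [ul _ _].
  rewrite (subtree_leaves sub xu); apply: le_trans (IH ul) _.
  exact: ler_wpDl (g_ge0 _ ut) (lexx _).
- move: (ut) => /=; rewrite cat_uniq => /and3P [_ _ ur].
  have xr := subtree_leaves sub xu.
  rewrite (notin_left ut xr) xr; apply: le_trans (IH ur) _.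
  exact: ler_wpDl (g_ge0 _ ut) (lexx _).
Qed.

Lemma pathsum_ge_proper g u l r x :
  (forall u, uniq (pleaves u) -> 0 <= g u) -> subtree u l \/ subtree u r ->
  uniq (pleaves (PNode l r)) -> x \in pleaves u -> g u <= pathsum g (PNode l r) x.
Proof.
move=> g_ge0 sub ut xu; move: (ut) => /=; rewrite cat_uniq => /and3P [ul _ ur].
case: sub => sub; have xt := subtree_leaves sub xu.
  by rewrite xt; apply: pathsum_ge_subtree.
by rewrite (notin_left ut xt) xt; apply: pathsum_ge_subtree.
Qed.

End PathSums.

Section Construction.
Variables (R : realType) (X : finType) (Tl Tr : ptree X) (y z : X).
Local Notation T := (PNode Tl Tr).
Hypotheses (phyT : phylo_tree T) (cherryT : subtree (cherry y z) T).

Lemma uniqT : uniq (pleaves T).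
Proof. by rewrite (perm_uniq phyT) enum_uniq. Qed.

Lemma memT x : x \in pleaves T.
Proof. by rewrite (perm_mem phyT) mem_enum. Qed.

Lemma y_neq_z : y != z.
Proof. by have := subtree_uniq cherryT uniqT; rewrite /= inE andbT. Qed.

(* n = |X|; the cherry share c exceeds the spread n + 1 of the targets; the
   interior shares eps add up to at most 1/4 along a path; the offset K
   exceeds every interior path sum, so that pendant shares are positive. *)
Let n : R := #|X|%:R.
Let c : R := n + 1.
Let eps : R := (4 * n)^-1.
Let K : R := c * n + 1.

Lemma n_ge2 : 2 <= n.
Proof.
rewrite /n cardT -(perm_size phyT) /= size_cat -[2]/(2%:R) ler_nat.
exact: leq_add (size_pleaves_gt0 Tl) (size_pleaves_gt0 Tr).
Qed.

Let order : seq X := y :: z :: [seq x <- enum X | (x != y) && (x != z)].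
Definition key (x : X) : nat := index x order.

Lemma mem_order x : x \in order.
Proof. by rewrite !inE mem_filter mem_enum andbT; case: eqP; case: eqP. Qed.

Lemma key_inj : injective key.
Proof.
move=> x1 x2 E.
by rewrite -(nth_index x1 (mem_order x1)) -/(key x1) E nth_index // mem_order.
Qed.

Lemma key_y : key y = 0%N.
Proof. by rewrite /key /= eqxx. Qed.

Lemma key_z : key z = 1%N.
Proof. by rewrite /key /= (negbTE y_neq_z) eqxx. Qed.

Lemma key_lt x : (key x < #|X|.+2)%N.
Proof.
apply: leq_trans (_ : size order <= _)%N; first by rewrite index_mem mem_order.
by rewrite /= !ltnS size_filter cardT count_size.
Qed.

Definition target (x : X) : R := K + (key x)%:R.

Definition inner_share (u : ptree X) : R :=
  if u is PNode _ _ then (if pleaves u == [:: y; z] then c else eps) else 0.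

Definition share (u : ptree X) : R :=
  if u is PLeaf x then target x - pathsum inner_share T x else inner_share u.

Definition wT : wtree X R := build share T.

(* Increase of the share of the edge entering u when y is deleted. *)
Definition excess (u : ptree X) : R :=
  inner_share u * (size (pleaves u))%:R / (count (fun x => x != y) (pleaves u))%:R
  - inner_share u.

Lemma eps_gt0 : 0 < eps.
Proof. by rewrite invr_gt0; have := n_ge2; lra. Qed.

Lemma inner_share_ge0 u : 0 <= inner_share u.
Proof.
by case: u => //= l r; case: ifP => _; [have := n_ge2; rewrite /c|have := eps_gt0]; lra.
Qed.

Lemma inner_share_le_c u : inner_share u <= c.
Proof.
have eps_le1 : eps <= 1 by rewrite invf_le1; have := n_ge2; lra.
by case: u => [_|l r] /=; [|case: ifP]; have := n_ge2; rewrite /c; lra.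
Qed.

(* Only the cherry itself has share c, and it has only y and z as leaves. *)
Lemma inner_share_off x u : x \in pleaves u -> x != y -> x != z -> inner_share u <= eps.
Proof.
case: u => [x0 _ _ _|l r]; first exact: ltW eps_gt0.
rewrite /inner_share; case: (pleaves _ =P _) => [-> | _ _ _ _]; last exact: lexx.
by rewrite !inE => /orP [] /eqP ->; rewrite eqxx.
Qed.

Lemma inner_path_le x : pathsum inner_share T x <= c * n.
Proof.
rewrite /n cardT -(perm_size phyT); apply: pathsum_le_size => [u _|].
  exact: inner_share_le_c.
by have := n_ge2; rewrite /c; lra.
Qed.

Lemma inner_path_off x : x != y -> x != z -> pathsum inner_share T x <= 1 / 4.
Proof.
move=> xy xz; have -> : 1 / 4 = eps * n by rewrite /eps; field; have := n_ge2; lra.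
rewrite /n cardT -(perm_size phyT); apply: pathsum_le_size => [u xu|].
  exact: inner_share_off xu xy xz.
exact: ltW eps_gt0.
Qed.

Lemma share_gt0 u : 0 < share u.
Proof.
case: u => [x|l r] /=.
  rewrite /target /K subr_gt0 -addrA; apply: le_lt_trans (inner_path_le x) _.
  by rewrite ltrDl; have := ler0n R (key x); lra.
by case: ifP => _; have := eps_gt0; have := n_ge2; rewrite /c; lra.
Qed.

Lemma FP_wT x : FP wT x = target x.
Proof.
rewrite /wT FP_build (@pathsum_leaf_node _ _ share inner_share) ?memT //=.
by rewrite addrC subrK.
Qed.

Lemma count_other (s : seq X) :
  uniq s -> (count (fun x => x != y) s + (y \in s))%N = size s.
Proof. by move=> us; rewrite -(count_predC (pred1 y) s) count_uniq_mem // addnC. Qed.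

(* An interior vertex has at least two leaves and loses at most one, so its
   share is multiplied by a factor between 1 and 2. *)
Lemma excess_bounds u : uniq (pleaves u) -> 0 <= excess u <= inner_share u.
Proof.
case: u => [x0 _|l r ul]; first by rewrite /excess /= !mul0r subrr lexx.
have share0 := inner_share_ge0 (PNode l r).
have s2 : (2 <= size (pleaves (PNode l r)))%N.
  by rewrite /= size_cat (leq_add (size_pleaves_gt0 l) (size_pleaves_gt0 r)).
move: s2; rewrite /excess -(count_other ul); set F := inner_share _.
set k := count _ _; case: (y \in _) => /= [|k2].
  rewrite addn1 ltnS => k1; have k0 : 0 < k%:R :> R by rewrite ltr0n.
  have -> : F * (k.+1)%:R / k%:R - F = F / k%:R.
    by rewrite -natr1; field; rewrite gt_eqF.
  by rewrite divr_ge0 ?ler_pdivrMr // ?ler_peMr // ?ler1n // ltW.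
rewrite addn0 in k2 *; rewrite mulfK ?subrr ?lexx // pnatr_eq0 -lt0n.
exact: leq_trans k2.
Qed.

(* The cherry edge goes from 2 leaves to 1: its share doubles from c to 2c. *)
Lemma excess_cherry : excess (cherry y z) = c.
Proof.
have zy : (z != y) by rewrite eq_sym y_neq_z.
by rewrite /excess /= !eqxx zy /= divr1; lra.
Qed.

Lemma FP_on_wT x :
  x != y -> FP_on (fun x => x != y) wT x = target x + pathsum excess T x.
Proof.
move=> xy; rewrite /wT FP_on_build.
rewrite (@pathsum_leaf_node _ _ _ (fun u => inner_share u + excess u)) ?memT //.
- by rewrite pathsumD /= xy divr1 mulr1; ring.
- by move=> l r; rewrite /excess addrC subrK.
- by move=> x0; rewrite /excess /= !mul0r subrr addr0.
Qed.

Lemma has_other_leaves u v : subtree (cherry y z) u -> uniq (pleaves u ++ pleaves v) ->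
  has (fun x => x != y) (pleaves u) && has (fun x => x != y) (pleaves v).
Proof.
move=> sub; rewrite cat_uniq => /and3P [_ dis _].
have yu : y \in pleaves u by apply: (subtree_leaves sub); rewrite !inE eqxx.
have zu : z \in pleaves u by apply: (subtree_leaves sub); rewrite !inE eqxx orbT.
rewrite (introT hasP) ?andTb; last by exists z; rewrite // eq_sym y_neq_z.
case: (pleaves v) (size_pleaves_gt0 v) dis => // a s _ /=; rewrite negb_or => /andP [au _].
by apply/orP; left; apply: contraNneq au => ->.
Qed.

Lemma deletion_bounds :
  subtree (cherry y z) Tl \/ subtree (cherry y z) Tr ->
  exists wt, [/\ induced (fun x => x != y) wT = Some wt,
    forall x, x != y -> x != z -> target x <= FP wt x <= target x + 1 / 4 &
    target z + c <= FP wt z].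
Proof.
move=> proper.
have /andP [hl hr] :
    has (fun x => x != y) (pleaves Tl) && has (fun x => x != y) (pleaves Tr).
  case: proper => sub; first exact: has_other_leaves sub uniqT.
  by rewrite andbC; apply: has_other_leaves sub _; rewrite uniq_catC uniqT.
rewrite -(wleaves_build share) in hl; rewrite -(wleaves_build share) in hr.
have [wt [Ewt FPwt]] : exists wt, induced (fun x => x != y) wT = Some wt /\
    forall x, x != y -> x \in wleaves wT -> FP wt x = FP_on (fun x => x != y) wT x.
  exact: (induced_node _ _ hl hr).
have FPwtE x : x != y -> FP wt x = target x + pathsum excess T x.
  by move=> xy; rewrite FPwt ?FP_on_wT // wleaves_build memT.
have excess_ge0 u : uniq (pleaves u) -> 0 <= excess u.
  by move=> uu; have /andP [] := excess_bounds uu.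
exists wt; split => // [x xy xz|].
  rewrite FPwtE // lerDl (pathsum_ge0 _ excess_ge0 uniqT) lerD2l /=.
  apply: le_trans (inner_path_off xy xz).
  by apply: pathsum_le uniqT => u uu; have /andP [] := excess_bounds uu.
have zy : z != y by rewrite eq_sym y_neq_z.
rewrite FPwtE // lerD2l -{1}excess_cherry.
by apply: pathsum_ge_proper proper uniqT _; rewrite // !inE eqxx orbT.
Qed.

Lemma target_sep x1 x2 (F1 F2 : R) :
  (key x1 < key x2)%N -> F1 <= target x1 + 1 / 4 -> target x2 <= F2 -> F1 < F2.
Proof.
move=> lt12; have k12 : (key x1)%:R + 1 <= (key x2)%:R :> R by rewrite natr1 ler_nat.
rewrite /target => le1 le2.
by apply: le_lt_trans le1 _; apply: lt_le_trans le2; lra.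
Qed.

Lemma target_sep_top x (F1 F2 : R) :
  F1 <= target x + 1 / 4 -> target z + c <= F2 -> F1 < F2.
Proof.
have kx : (key x)%:R <= n + 1 by rewrite /n natr1 ler_nat -ltnS key_lt.
rewrite /target key_z /c => le1 le2.
by apply: le_lt_trans le1 _; apply: lt_le_trans le2; lra.
Qed.

Lemma deletion_ranking : exists wt, [/\ induced (fun x => x != y) wT = Some wt,
  forall x1 x2, x1 != y -> x2 != y -> x1 != x2 -> FP wt x1 != FP wt x2 &
  forall x, x != y -> FP wt x <= FP wt z].
Proof.
have [Ec|proper] :
    cherry y z = T \/ subtree (cherry y z) Tl \/ subtree (cherry y z) Tr.
  by case/subtree_nodeP: cherryT; auto.
  have only_z x : x != y -> x = z.
    by move=> xy; have := memT x; rewrite -Ec !inE (negbTE xy) => /eqP.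
  have [wt Ewt] : exists wt, induced (fun x => x != y) wT = Some wt.
    apply: induced_some; apply/hasP; exists z; last by rewrite eq_sym y_neq_z.
    by rewrite wleaves_build memT.
  by exists wt; split=> // [x1 x2 /only_z -> /only_z ->|x /only_z ->]; rewrite ?eqxx.
have [wt [Ewt Bx Bz]] := deletion_bounds proper.
exists wt; split=> // [x1 x2 x1y x2y|x xy]; last first.
  have [->|xz] := eqVneq x z; first exact: lexx.
  by have /andP [_ hi] := Bx x xy xz; apply: ltW (target_sep_top hi Bz).
have [->|x1z] := eqVneq x1 z.
  have [->|x2z] := eqVneq x2 z; first by rewrite eqxx.
  by have /andP [_ hi] := Bx x2 x2y x2z; rewrite gt_eqF // (target_sep_top hi Bz).
have [->|x2z] := eqVneq x2 z.
  by have /andP [_ hi] := Bx x1 x1y x1z; rewrite lt_eqF // (target_sep_top hi Bz).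
have /andP [lo1 hi1] := Bx x1 x1y x1z; have /andP [lo2 hi2] := Bx x2 x2y x2z.
move=> x12; case: (ltngtP (key x1) (key x2)) => [lt|gt|/key_inj E].
- by rewrite lt_eqF // (target_sep lt hi1 lo2).
- by rewrite gt_eqF // (target_sep gt hi2 lo1).
- by rewrite E eqxx in x12.
Qed.

Lemma FP_wT_inj x1 x2 : x1 != x2 -> FP wT x1 != FP wT x2.
Proof.
apply: contra => /eqP; rewrite !FP_wT /target => /addrI /eqP.
by rewrite eqr_nat => /eqP /key_inj ->.
Qed.

Lemma FP_wT_argmin y' : (forall x, FP wT y' <= FP wT x) -> y' = y.
Proof.
move=> /(_ y); rewrite !FP_wT /target lerD2l ler_nat key_y leqn0 -key_y.
by move=> /eqP /key_inj.
Qed.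

Lemma FP_wT_second z' :
  z' != y -> (forall x, x != y -> FP wT z' <= FP wT x) -> z' = z.
Proof.
move=> z'y /(_ z); rewrite eq_sym y_neq_z !FP_wT /target lerD2l ler_nat key_z.
move=> /(_ isT) k1; have k0 : key z' != 0%N.
  by apply: contra z'y; rewrite -key_y => /eqP /key_inj ->.
by apply: key_inj; rewrite key_z; apply/eqP; rewrite eqn_leq k1 lt0n k0.
Qed.

Lemma FP_construction : exists w : wtree X R,
  [/\ wshape w = T, pos_lengths w,
      (forall x1 x2 : X, x1 != x2 -> FP w x1 != FP w x2) &
      forall y : X, (forall x : X, FP w y <= FP w x) ->
        exists wt : wtree X R,
          [/\ induced (fun x => x != y) w = Some wt,
              (forall x1 x2 : X, x1 != y -> x2 != y -> x1 != x2 ->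
                 FP wt x1 != FP wt x2) &
              forall z : X, z != y ->
                (forall x : X, x != y -> FP w z <= FP w x) ->
                forall x : X, x != y -> FP wt x <= FP wt z]].
Proof.
exists wT; split; [exact: wshape_build | exact: pos_build share_gt0 | exact: FP_wT_inj|].
move=> y' /FP_wT_argmin ->; have [wt [Ewt inj top]] := deletion_ranking.
by exists wt; split=> // z' z'y /(FP_wT_second z'y) ->.
Qed.

End Construction.

Theorem theorem3 (R : realType) (X : finType) (T : ptree X) :
  phylo_tree T -> (2 <= #|X|)%N ->
  exists w : wtree X R,
    [/\ wshape w = T, pos_lengths w,
        (* (i) the ranking pi_T is strict *)
        (forall x1 x2 : X, x1 != x2 -> FP w x1 != FP w x2) &
        (* (ii) for y = argmin FP_T, in T~ = T_{X \ {y}} ... *)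
        forall y : X, (forall x : X, FP w y <= FP w x) ->
          exists wt : wtree X R,
            [/\ induced (fun x => x != y) w = Some wt,
                (* pi_{T~} strict on X \ {y} *)
                (forall x1 x2 : X, x1 != y -> x2 != y -> x1 != x2 ->
                   FP wt x1 != FP wt x2) &
                (* argmax_{X~} FP_{T~} = argmin_{X~} FP_T *)
                forall z : X, z != y ->
                  (forall x : X, x != y -> FP w z <= FP w x) ->
                  forall x : X, x != y -> FP wt x <= FP wt z]].
Proof.
case: T => [x|Tl Tr] phyT n2; first by move: n2; rewrite cardT -(perm_size phyT).
have [y [z cherryT]] := exists_cherry Tl Tr.
exact: FP_construction phyT cherryT.
Qed.
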